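(* Let $n\ge1$ and let $w_{12},w_{13},w_{23}$ be real numbers. For the minimal algorithm transferring $n$ disks from Peg 1 to Peg 3, played alternately by Anh (odd-numbered moves) and Bao (even-numbered moves), the total score is $\Delta_{13}(n)=w_{13}$ if $n$ is odd, and $\Delta_{13}(n)=w_{12}+w_{23}-w_{13}$ if $n$ is even.
   Context: Tower of Hanoi on three pegs (labeled 1, 2, 3) with disks $1<2<\dots<n$ ordered by size; a legal move transfers the top disk of one peg to a different peg that is empty or has a larger top disk. A move between Peg $i$ and Peg $j$ (either direction) is a move along edge $\{i,j\}$ and earns the mover the real weight $w_{ij}=w_{ji}$. The minimal algorithm $\mathcal{M}(n;i\to j)$ ($i\ne j$, $k$ the third peg) is defined recursively: $\mathcal{M}(1;i\to j)$ is the single move of disk 1 from $i$ to $j$; for $n\ge2$, $\mathcal{M}(n;i\to j)$ is $\mathcal{M}(n-1;i\to k)$, then the move of disk $n$ from $i$ to $j$, then $\mathcal{M}(n-1;k\to j)$; it has $2^n-1$ moves. When a move sequence is played in the two-player game, Anh makes moves $1,3,5,\dots$ and Bao makes moves $2,4,\dots$; $A_{ij}(n)$ and $B_{ij}(n)$ are the total points of Anh and Bao for $\mathcal{M}(n;i\to j)$, and $\Delta_{ij}(n)=A_{ij}(n)-B_{ij}(n)$. *)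

From Stdlib Require Import Reals List Arith.
Import ListNotations.
Open Scope R_scope.

(* A move: (disk, source peg, target peg); pegs are 1, 2, 3. *)
Definition move := (nat * nat * nat)%type.

(* The third peg, for distinct i j in {1,2,3}. *)
Definition third (i j : nat) : nat := (6 - i - j)%nat.

(* Minimal algorithm M(n; i -> j); hanoi m corresponds to n = m+1 disks. *)
Fixpoint hanoi_aux (m : nat) (i j : nat) : list move :=
  match m with
  | O => [(1%nat, i, j)]
  | S m' => hanoi_aux m' i (third i j) ++ [(S m, i, j)]
            ++ hanoi_aux m' (third i j) j
  end.

Definition hanoi (n i j : nat) : list move :=
  match n with O => [] | S m => hanoi_aux m i j end.

Definition edge_weight (w12 w13 w23 : R) (a b : nat) : R :=
  match a, b with
  | 1%nat, 2%nat | 2%nat, 1%nat => w12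
  | 1%nat, 3%nat | 3%nat, 1%nat => w13
  | 2%nat, 3%nat | 3%nat, 2%nat => w23
  | _, _ => 0
  end.

Definition move_weight (w12 w13 w23 : R) (mv : move) : R :=
  let '(_, a, b) := mv in edge_weight w12 w13 w23 a b.

(* Points of Anh (moves 1,3,5,...) and Bao (moves 2,4,...). *)
Fixpoint anh_score (w12 w13 w23 : R) (s : list move) : R :=
  match s with
  | [] => 0
  | mv :: t => move_weight w12 w13 w23 mv + bao_score w12 w13 w23 t
  end
with bao_score (w12 w13 w23 : R) (s : list move) : R :=
  match s with
  | [] => 0
  | _ :: t => anh_score w12 w13 w23 t
  end.

Definition hanoi_Delta (w12 w13 w23 : R) (n i j : nat) : R :=
  anh_score w12 w13 w23 (hanoi n i j) - bao_score w12 w13 w23 (hanoi n i j).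

(* Write [s = w12 + w13 + w23].  The score difference of M(m+1; i -> j) is
   [w_ij] when [m] is even and [s - 2 w_ij] when [m] is odd.  Since every
   recursive block has an odd number of moves, the middle move of disk [m+2]
   is made by Bao and the second block starts with Anh again, so the difference
   obeys [Delta(m+1; i,j) = Delta(m; i,k) - w_ij + Delta(m; k,j)]; the closed
   form then propagates because [w_ik + w_kj + w_ij = s]. *)
From Stdlib Require Import Reals Arith Lia Lra List.
Import ListNotations.
Open Scope R_scope.

Definition score_diff (w12 w13 w23 : R) (s : list move) : R :=
  anh_score w12 w13 w23 s - bao_score w12 w13 w23 s.

Lemma score_diff_cons w12 w13 w23 mv s :
  score_diff w12 w13 w23 (mv :: s) =
    move_weight w12 w13 w23 mv - score_diff w12 w13 w23 s.
Proof. unfold score_diff; simpl; lra. Qed.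

Lemma score_diff_app w12 w13 w23 (s1 s2 : list move) :
  score_diff w12 w13 w23 (s1 ++ s2) =
    score_diff w12 w13 w23 s1 +
    (if Nat.even (length s1) then 1 else -1) * score_diff w12 w13 w23 s2.
Proof.
  induction s1 as [|mv s1 IH]; simpl app.
  - unfold score_diff; simpl; lra.
  - rewrite !score_diff_cons, IH; cbn [length].
    rewrite Nat.even_succ, <- Nat.negb_even.
    destruct (Nat.even (length s1)); simpl; lra.
Qed.

Lemma hanoi_aux_length_odd m i j : Nat.even (length (hanoi_aux m i j)) = false.
Proof.
  revert i j; induction m as [|m IH]; intros i j; [reflexivity|].
  simpl hanoi_aux; rewrite !length_app; cbn [length].
  rewrite Nat.even_add, Nat.even_succ, <- Nat.negb_even, !IH.
  reflexivity.
Qed.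

Lemma score_diff_hanoi_aux_S w12 w13 w23 m i j :
  score_diff w12 w13 w23 (hanoi_aux (S m) i j) =
    score_diff w12 w13 w23 (hanoi_aux m i (third i j))
    - edge_weight w12 w13 w23 i j
    + score_diff w12 w13 w23 (hanoi_aux m (third i j) j).
Proof.
  simpl hanoi_aux.
  rewrite score_diff_app, hanoi_aux_length_odd.
  change ([(S (S m), i, j)] ++ hanoi_aux m (third i j) j)
    with ((S (S m), i, j) :: hanoi_aux m (third i j) j).
  rewrite score_diff_cons; simpl move_weight; lra.
Qed.

Definition peg_pair (i j : nat) : Prop :=
  (1 <= i <= 3)%nat /\ (1 <= j <= 3)%nat /\ i <> j.

Lemma peg_pair_third_l i j : peg_pair i j -> peg_pair i (third i j).
Proof. unfold peg_pair, third; lia. Qed.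

Lemma peg_pair_third_r i j : peg_pair i j -> peg_pair (third i j) j.
Proof. unfold peg_pair, third; lia. Qed.

Lemma edge_weight_triangle w12 w13 w23 i j : peg_pair i j ->
  edge_weight w12 w13 w23 i (third i j) + edge_weight w12 w13 w23 (third i j) j
  + edge_weight w12 w13 w23 i j = w12 + w13 + w23.
Proof.
  intros [[Hi1 Hi3] [[Hj1 Hj3] Hij]].
  destruct i as [|[|[|[|i]]]]; try lia;
  destruct j as [|[|[|[|j]]]]; try lia;
  unfold third; simpl; lra.
Qed.

Lemma score_diff_hanoi_aux w12 w13 w23 m i j : peg_pair i j ->
  score_diff w12 w13 w23 (hanoi_aux m i j) =
    if Nat.even m then edge_weight w12 w13 w23 i j
    else w12 + w13 + w23 - 2 * edge_weight w12 w13 w23 i j.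
Proof.
  revert i j; induction m as [|m IH]; intros i j Hij.
  - unfold score_diff; simpl; lra.
  - rewrite score_diff_hanoi_aux_S,
      (IH _ _ (peg_pair_third_l _ _ Hij)), (IH _ _ (peg_pair_third_r _ _ Hij)).
    pose proof (edge_weight_triangle w12 w13 w23 _ _ Hij).
    rewrite Nat.even_succ, <- Nat.negb_even.
    destruct (Nat.even m); simpl; lra.
Qed.

Theorem lemma1 (n : nat) (w12 w13 w23 : R) (hn : (1 <= n)%nat) :
  hanoi_Delta w12 w13 w23 n 1%nat 3%nat =
    (if Nat.odd n then w13 else (w12 + w23 - w13)%R).
Proof.
  destruct n as [|m]; [lia|].
  change (hanoi_Delta w12 w13 w23 (S m) 1 3)
    with (score_diff w12 w13 w23 (hanoi_aux m 1 3)).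
  rewrite score_diff_hanoi_aux by (unfold peg_pair; lia).
  rewrite Nat.odd_succ; simpl edge_weight.
  destruct (Nat.even m); lra.
Qed.
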